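(* Let $n,m$ be positive integers with $2(m+1)\le n$ and let $H$ be a graph. Then $$\gamma_{gr}(C_n^m\circ H)=\begin{cases}\left\lfloor \frac{n}{m+1}\right\rfloor (\gamma_{gr} (H)-(m+1))+n & \text{if } \gamma_{gr}(H)\geq m+1,\\ 2\gamma_{gr}(H)+n-(2m+2) & \text{if } \gamma_{gr}(H)\leq m.\end{cases}$$
   Context: $C_n^m$ has vertex set $[n]$, distinct vertices adjacent iff their distance in the cycle $1,2,\dots,n,1$ is at most $m$. The lexicographic product $G\circ H$ has vertex set $V(G)\times V(H)$, with $(g_1,h_1)$ adjacent to $(g_2,h_2)$ iff $g_1g_2\in E(G)$, or $g_1=g_2$ and $h_1h_2\in E(H)$. $\gamma_{gr}$ is the Grundy domination number: the maximum length of a sequence $(v_1,\dots,v_k)$ of distinct vertices whose set is dominating and such that each $N[v_i]\setminus\bigcup_{j<i}N[v_j]$ is non-empty ($N[\cdot]$ the closed neighborhood). *)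

From mathcomp Require Import all_boot.
Set Implicit Arguments. Unset Strict Implicit. Unset Printing Implicit Defensive.

(* A (finite, simple) graph: a finType of vertices with a symmetric,
   irreflexive adjacency relation e. *)

Definition cnbh (T : finType) (e : rel T) (v : T) : {set T} :=
  [set u | (u == v) || e v u].

Fixpoint footprint_ok (T : finType) (e : rel T) (prev s : seq T) : bool :=
  match s with
  | [::] => true
  | v :: s' =>
      [exists w, (w \in cnbh e v) && ~~ has (fun u => w \in cnbh e u) prev]
      && footprint_ok e (v :: prev) s'
  end.

Definition dominating_seq (T : finType) (e : rel T) (s : seq T) : bool :=
  [forall w, has (fun u => w \in cnbh e u) s].

Definition grundy_dom_seq (T : finType) (e : rel T) (s : seq T) : bool :=
  [&& uniq s, dominating_seq e s & footprint_ok e [::] s].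

(* Grundy domination number: maximum length of a Grundy dominating sequence.
   Such a sequence is duplicate-free, so its length is at most #|T|. *)
Definition gamma_gr (T : finType) (e : rel T) : nat :=
  \max_(k < #|T|.+1 | [exists t : k.-tuple T, grundy_dom_seq e t]) k.

Definition cdist (n : nat) (i j : 'I_n) : nat :=
  minn ((i + n - j) %% n) ((j + n - i) %% n).

Arguments cdist : clear implicits.
Definition cycle_pow (n m : nat) : rel 'I_n :=
  fun i j => (i != j) && (cdist n i j <= m).

Definition lexprod (G H : finType) (eG : rel G) (eH : rel H) : rel (G * H) :=
  fun x y => eG x.1 y.1 || ((x.1 == y.1) && eH x.2 y.2).
Arguments cycle_pow : clear implicits.

From mathcomp Require Import all_boot zify.
Set Implicit Arguments. Unset Strict Implicit. Unset Printing Implicit Defensive.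

(* Read a legal sequence S of C_n^m o H layer by layer, a layer being the copy
   of H over a vertex of C_n^m. Call a played layer early if it is played before
   all its played neighbours; early layers are pairwise nonadjacent. The
   restriction of S to a layer is legal in H, so an early layer carries at most
   gamma_gr(H) vertices. Every other played layer carries exactly one vertex,
   whose footprint lies in a layer y of which it is the first played neighbour;
   if y is early it then carries at most gamma_gr(H) - 1 vertices. Let e be the
   number of early layers and R the number of layers whose first played
   neighbour is early: R >= 2m, and R >= e m when e >= 2, because of two
   consecutive early layers one is the first played neighbour of its m layers
   facing the other. Since early layers, these R layers and the remaining
   footprinted layers are disjoint, |S| + R + e <= e gamma_gr(H) + n, which
   gives the upper bound.
   Conversely, with r = n - e(m+1), play a Grundy dominating sequence of H in
   layer 0, then one vertex in each of the layers 1..r, each footprinting the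
   layer m further on, then the sequence of H again in the layers r + i(m+1),
   0 < i < e; taking e = n/(m+1) or e = 2 gives the lower bound. *)

Lemma has_take_nth (T : Type) (p : pred T) x0 (s : seq T) k :
  has p (take k s) -> exists j, [/\ j < k, j < size s & p (nth x0 s j)].
Proof.
move/(has_nthP x0) => -[j]; rewrite size_take_min leq_min => /andP[lt_jk lt_js].
by rewrite nth_take // => p_j; exists j.
Qed.

Lemma count_le1 (T : Type) (p : pred T) x0 (s : seq T) k :
  (forall i, i < size s -> p (nth x0 s i) -> i = k) -> count p s <= 1.
Proof.
elim: s k => [|v s IH] k //= only_k.
case p_v: (p v); last by apply: (IH k.-1) => i lt_i /(only_k i.+1 lt_i) <-.
have k0 : 0 = k by apply: only_k.
rewrite add1n ltnS leqn0 -/(count p s) eqn0Ngt -has_count.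
by apply/(has_nthP x0) => -[i lt_i /(only_k i.+1 lt_i)]; rewrite -k0.
Qed.

Lemma size_sum_count (I : Type) (J : finType) (f : I -> J) (s : seq I) :
  size s = \sum_(x : J) count (fun v => f v == x) s.
Proof.
elim: s => [|v s IH] /=; first by rewrite big1.
rewrite big_split /= -IH (bigD1 (f v)) //= eqxx big1 ?add1n // => x.
by rewrite eq_sym => /negbTE ->.
Qed.

(** * Grundy domination sequences *)

Section GrundyDomination.
Variables (T : finType) (e : rel T).

Lemma mem_cnbh_self v : v \in cnbh e v.
Proof. by rewrite inE eqxx. Qed.

Lemma footprint_ok_cat prev s1 s2 :
  footprint_ok e prev (s1 ++ s2) =
  footprint_ok e prev s1 && footprint_ok e (catrev s1 prev) s2.
Proof. by elim: s1 prev => [|v s1 IH] prev //=; rewrite IH andbA. Qed.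

Lemma footprint_ok_uniq prev s :
  footprint_ok e prev s -> uniq s && all (fun v => v \notin prev) s.
Proof.
elim: s prev => [|v s IH] prev //= /andP[/existsP[w /andP[wv fresh_w]]].
move=> /IH /andP[-> /allP new_s]; rewrite andbT.
have -> : v \notin prev.
  by apply: (contraNN _ fresh_w) => v_prev; apply/hasP; exists v.
rewrite /=; apply/andP; split.
  by apply/negP=> /new_s; rewrite inE eqxx.
by apply/allP=> u /new_s; rewrite inE negb_or => /andP[].
Qed.

Lemma footprint_size_le_card s : footprint_ok e [::] s -> size s <= #|T|.
Proof.
by case/footprint_ok_uniq/andP => /card_uniqP <- _; apply: max_card.
Qed.

Lemma footprint_ok_rcons s w :
  footprint_ok e [::] s -> ~~ has (fun u => w \in cnbh e u) s ->
  footprint_ok e [::] (rcons s w).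
Proof.
move=> fs fresh_w; rewrite -cats1 footprint_ok_cat fs /= andbT.
by apply/existsP; exists w; rewrite mem_cnbh_self catrevE cats0 has_rev.
Qed.

Lemma grundy_dom_seq_size_le s : grundy_dom_seq e s -> size s <= gamma_gr e.
Proof.
move=> gs; have /and3P[_ _ fs] := gs.
have s_lt : size s < #|T|.+1 by rewrite ltnS footprint_size_le_card.
rewrite (_ : size s = Ordinal s_lt) //.
apply: (leq_bigmax_cond (P := fun k : 'I_#|T|.+1 =>
  [exists t : k.-tuple T, grundy_dom_seq e t])).
by apply/existsP; exists (in_tuple s).
Qed.

Lemma gamma_gr_le_bound B :
  (forall s, grundy_dom_seq e s -> size s <= B) -> gamma_gr e <= B.
Proof.
by move=> le_B; apply/bigmax_leqP => k /existsP[t /le_B]; rewrite size_tuple.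
Qed.

Lemma footprint_ok_extend s :
  footprint_ok e [::] s -> exists2 t, size s <= size t & grundy_dom_seq e t.
Proof.
have [k] := ubnP (#|T| - size s); elim: k s => // k IH s lt_k fs.
have [dom | /forallPn[w fresh_w]] := boolP (dominating_seq e s).
  by exists s; rewrite // /grundy_dom_seq dom fs (andP (footprint_ok_uniq fs)).1.
have fsw := footprint_ok_rcons fs fresh_w.
have := footprint_size_le_card fsw; rewrite size_rcons => s_lt.
have [|t le_t gt] := IH _ _ fsw; first by rewrite size_rcons; lia.
by exists t; rewrite // (leq_trans _ le_t) // size_rcons.
Qed.

Lemma footprint_size_le_gamma_gr s : footprint_ok e [::] s -> size s <= gamma_gr e.
Proof.
by case/footprint_ok_extend => t le_t /grundy_dom_seq_size_le; apply: leq_trans.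
Qed.

Lemma footprint_size_lt_gamma_gr s :
  footprint_ok e [::] s -> ~~ dominating_seq e s -> size s < gamma_gr e.
Proof.
move=> fs /forallPn[w fresh_w].
by have := footprint_size_le_gamma_gr (footprint_ok_rcons fs fresh_w); rewrite size_rcons.
Qed.

Lemma gamma_gr_attained : exists2 s, footprint_ok e [::] s & size s = gamma_gr e.
Proof.
have [s _ gs] := footprint_ok_extend (erefl : footprint_ok e [::] [::]).
have [_ _ fs] := and3P gs.
have s_lt : size s < #|T|.+1 by rewrite ltnS footprint_size_le_card.
pose P := fun k : 'I_#|T|.+1 => [exists t : k.-tuple T, grundy_dom_seq e t].
have P_s : 0 < #|P|.
  by apply/card_gt0P; exists (Ordinal s_lt); apply/existsP; exists (in_tuple s).
rewrite /gamma_gr.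
have [k /existsP[t /and3P[_ _ ft]] ->] :=
  eq_bigmax_cond (fun k : 'I_#|T|.+1 => nat_of_ord k) P_s.
by exists t; rewrite ?size_tuple.
Qed.

Lemma gamma_gr_gt0 : 0 < #|T| -> 0 < gamma_gr e.
Proof.
case/card_gt0P => v _; apply: (@footprint_size_le_gamma_gr [:: v]).
by rewrite /= andbT; apply/existsP; exists v; rewrite mem_cnbh_self.
Qed.

Lemma footprint_ok_nth d prev s i : footprint_ok e prev s -> i < size s ->
  exists w, [/\ w \in cnbh e (nth d s i),
    ~~ has (fun u => w \in cnbh e u) prev &
    forall j, j < i -> w \notin cnbh e (nth d s j)].
Proof.
elim: s prev i => [|v s IH] prev [|i] //= /andP[/existsP[w /andP[wv fresh_w]] fs] lt_i.
  by exists w.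
have [w' [w'_i]] := IH _ i fs lt_i; rewrite /= negb_or => /andP[w'_v fresh_w'] w'_j.
by exists w'; split => // -[|j] //= /w'_j.
Qed.

End GrundyDomination.

Definition gamma_gr_formula (n m G : nat) : nat :=
  if m + 1 <= G then n %/ (m + 1) * (G - (m + 1)) + n else 2 * G + n - (2 * m + 2).

Lemma le_gamma_gr_formula n m G k R e : 2 * (m + 1) <= n -> 0 < G -> 0 < e ->
  k + R + e <= e * G + n -> R + e <= n -> 2 * m <= R -> (1 < e -> e * m <= R) ->
  k <= gamma_gr_formula n m G.
Proof.
move=> n_large G_gt0 e_gt0 k_le R_le R_2m R_em; set q := n %/ (m + 1).
have q_ge2 : 2 <= q by rewrite leq_divRL // addn1.
rewrite /gamma_gr_formula; case: (ltngtP e 1) => [| e_gt1 | e1]; first lia; last first.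
  by subst e; case: ifP => _; nia.
have e_le_q : e <= q by rewrite leq_divRL ?addn1 //; have := R_em e_gt1; lia.
have := R_em e_gt1; have em : e * (m + 1) = e * m + e by rewrite mulnDr muln1.
case: ifP => G_large.
  have := leq_mul e_le_q (leqnn (G - (m + 1))).
  have : e * G = e * (G - (m + 1)) + e * (m + 1) by rewrite -mulnDr subnK.
  lia.
have := leq_mul e_gt1 (leqnn (m + 1 - G)).
have : e * (m + 1) = e * G + e * (m + 1 - G) by rewrite -mulnDr subnKC //; lia.
lia.
Qed.

(** * Cyclic offsets and the cycle power *)

Section CyclicOffset.
Variable n : nat.
Implicit Types x y z : 'I_n.

Definition off x y : nat := (y + n - x) %% n.

Lemma offE x y : off x y = if x <= y then y - x else y + n - x.
Proof.
rewrite /off; have := ltn_ord x; have := ltn_ord y; case: (leqP x y) => le_xy lt_y lt_x.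
  by rewrite -addnBAC // modnDr modn_small //; lia.
by rewrite modn_small //; lia.
Qed.

Lemma off_id x : off x x = 0.
Proof. by rewrite /off addKn modnn. Qed.

Lemma off_lt x y : off x y < n.
Proof. by rewrite offE; have := ltn_ord x; have := ltn_ord y; case: ifP; lia. Qed.

Lemma off_eq0 x y : (off x y == 0) = (x == y).
Proof.
rewrite offE -val_eqE /=; have := ltn_ord x; have := ltn_ord y.
by case: ifP; lia.
Qed.

Lemma off_inj x : injective (off x).
Proof.
move=> y z; rewrite !offE => eq_off; apply: val_inj => /=; move: eq_off.
by have := ltn_ord x; have := ltn_ord y; have := ltn_ord z; do 2 case: ifP; lia.
Qed.

Lemma off_trans x y z :
  off x z = if off x y + off y z < n then off x y + off y z else off x y + off y z - n.
Proof.
rewrite !offE; have := ltn_ord x; have := ltn_ord y; have := ltn_ord z.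
by repeat case: ifP; lia.
Qed.

Lemma off_sym x y : x != y -> off y x = n - off x y.
Proof.
rewrite -val_eqE !offE /=; have := ltn_ord x; have := ltn_ord y.
by do 2 case: ifP; lia.
Qed.

Hypothesis n_gt0 : 0 < n.

Definition ord_mod (k : nat) : 'I_n := Ordinal (ltn_pmod k n_gt0).

Lemma off_ord_mod x k : off x (ord_mod (x + k)) = k %% n.
Proof.
have le_xn := ltnW (ltn_ord x).
by rewrite /off /= -addnBA // modnDml -addnA addnCA subnKC // modnDr.
Qed.

End CyclicOffset.

Section CyclePower.
Variables n m : nat.
Local Notation adj := (cycle_pow n m).
Implicit Types x y z : 'I_n.

Lemma cycle_pow_off x y :
  adj x y = (0 < off x y) && ((off x y <= m) || (n - m <= off x y)).
Proof.
rewrite /cycle_pow /cdist -/(off y x) -/(off x y).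
have [-> | ne] := eqVneq x y; first by rewrite off_id.
rewrite /= (off_sym ne) lt0n off_eq0 ne geq_min.
by have := off_lt x y; have := off_eq0 x y; rewrite (negbTE ne); lia.
Qed.

Lemma cycle_pow_sym : symmetric adj.
Proof.
move=> x y; have [-> // | ne] := eqVneq x y.
rewrite !cycle_pow_off (off_sym ne).
by have := off_lt x y; have := off_eq0 x y; rewrite (negbTE ne); lia.
Qed.

Lemma cycle_pow_irr : irreflexive adj.
Proof. by move=> x; rewrite /cycle_pow eqxx. Qed.

Lemma cycle_pow_ord_mod (n_gt0 : 0 < n) a b : a < b < n ->
  adj (ord_mod n_gt0 a) (ord_mod n_gt0 b) = (b - a <= m) || (n - m <= b - a).
Proof.
move=> /andP[lt_ab lt_b]; rewrite cycle_pow_off offE /= !modn_small //; try lia.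
by rewrite (ltnW lt_ab) subn_gt0 lt_ab.
Qed.

Lemma cycle_pow_across x y x' z :
  0 < off x y < off x x' -> off x x' < off x z -> adj y z -> adj x z || adj x' z.
Proof.
move=> /andP[y_gt0 y_lt] x'_lt; rewrite !cycle_pow_off.
have := off_trans x y z; have := off_trans x x' z.
have := off_lt x z; have := off_lt y z; have := off_lt x' z.
by do 2 case: ifP; lia.
Qed.

End CyclePower.

Section LexprodNeighbourhood.
Variables (G W : finType) (eG : rel G) (eH : rel W).
Hypothesis eG_irr : irreflexive eG.
Local Notation P := (lexprod eG eH).
Implicit Types u w : G * W.

Lemma cnbh_lexprod_adj u w : eG u.1 w.1 -> w \in cnbh P u.
Proof. by move=> adj_uw; rewrite inE /lexprod adj_uw orbT. Qed.

Lemma cnbh_lexprodP u w : w \in cnbh P u -> w.1 = u.1 \/ eG u.1 w.1.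
Proof.
by rewrite inE /lexprod => /orP[/eqP-> | /orP[| /andP[/eqP]]]; [left | right | left].
Qed.

Lemma notin_cnbh_lexprod u w : u.1 != w.1 -> ~~ eG u.1 w.1 -> w \notin cnbh P u.
Proof.
move=> ne nadj; rewrite inE /lexprod (negbTE nadj) (negbTE ne) /= orbF.
by apply: contraNneq ne => ->.
Qed.

Lemma cnbh_lexprod_layer x h h' : ((x, h) \in cnbh P (x, h')) = (h \in cnbh eH h').
Proof.
by rewrite !inE /lexprod /= eG_irr eqxx /= -pair_eqE /= eqxx.
Qed.

Definition layer_proj x (l : seq (G * W)) : seq W := [seq v.2 | v <- l & v.1 == x].

Lemma layer_proj_cons x v l :
  layer_proj x (v :: l) = if v.1 == x then v.2 :: layer_proj x l else layer_proj x l.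
Proof. by rewrite /layer_proj /=; case: ifP. Qed.

Lemma footprint_ok_layer_proj x prev l :
  footprint_ok P prev l -> footprint_ok eH (layer_proj x prev) (layer_proj x l).
Proof.
elim: l prev => [|v l IH] prev //= /andP[/existsP[w /andP[wv fresh_w]] fl].
have := IH _ fl; rewrite !layer_proj_cons; case: eqP => [vx | _] //= -> /[!andbT].
have [x_prev | x_new] := boolP (has (fun u => u.1 == x) prev); last first.
  have -> : layer_proj x prev = [::].
    by apply/eqP; rewrite -size_eq0 size_map size_filter -leqn0 leqNgt -has_count.
  by apply/existsP; exists v.2; rewrite mem_cnbh_self.
have w_x : w.1 = x.
  case: (cnbh_lexprodP wv) => [-> // | adj_vw].
  case/hasP: x_prev => u u_prev /eqP ux; case/hasP: fresh_w; exists u => //.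
  by apply: cnbh_lexprod_adj; rewrite ux -vx.
apply/existsP; exists w.2; apply/andP; split.
  by rewrite -(cnbh_lexprod_layer x) -{1}w_x -vx -!surjective_pairing.
apply: contra fresh_w => /hasP[h /mapP[u]]; rewrite mem_filter => /andP[/eqP ux u_prev] ->.
rewrite -(cnbh_lexprod_layer x) -{1}w_x -ux -!surjective_pairing => w_u.
by apply/hasP; exists u.
Qed.

End LexprodNeighbourhood.

(** * Upper bound: legal sequences of the lexicographic product *)

Section LegalSequence.
Variables (n m : nat) (V : finType) (eH : rel V).
Local Notation adj := (cycle_pow n m).
Local Notation P := (lexprod adj eH).
Variables (S : seq ('I_n * V)) (d : 'I_n * V).
Hypothesis S_ok : footprint_ok P [::] S.
Local Notation s i := (nth d S i).
Implicit Types x y z g c : 'I_n.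

Definition chosen x := has (fun v : 'I_n * V => v.1 == x) S.
Definition first_pos x := find (fun v : 'I_n * V => v.1 == x) S.
Definition mult x := count (fun v : 'I_n * V => v.1 == x) S.

Definition early x :=
  chosen x && [forall y, adj x y ==> chosen y ==> (first_pos x < first_pos y)].

Definition first_nbr g y :=
  [&& chosen g, adj g y &
      [forall z, chosen z ==> adj z y ==> (first_pos g <= first_pos z)]].

Lemma first_posP x : chosen x -> first_pos x < size S /\ (s (first_pos x)).1 = x.
Proof. by move=> cx; split; [rewrite -has_find | apply/eqP; exact: (nth_find d cx)]. Qed.

Lemma chosen_nth i : i < size S -> chosen (s i).1 /\ first_pos (s i).1 <= i.
Proof.
move=> lt_i; split; first by apply/hasP; exists (s i); rewrite ?mem_nth.
by rewrite leqNgt; apply/negP => /(before_find d); rewrite eqxx.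
Qed.

Lemma first_pos_inj x y : chosen x -> chosen y -> first_pos x = first_pos y -> x = y.
Proof.
move=> cx cy eq_pos; have [_ <-] := first_posP cx; have [_ <-] := first_posP cy.
by rewrite eq_pos.
Qed.

Lemma footprint_nth i : i < size S ->
  exists2 w, w \in cnbh P (s i) & forall j, j < i -> w \notin cnbh P (s j).
Proof. by case/(footprint_ok_nth d S_ok) => w [? _ ?]; exists w. Qed.

Lemma early_chosen x : early x -> chosen x.
Proof. by case/andP. Qed.

Lemma early_before x y : early x -> adj x y -> chosen y -> first_pos x < first_pos y.
Proof. by case/andP=> _ /forallP/(_ y)/implyP/[apply]/implyP. Qed.

Lemma not_early_nbr x : chosen x -> ~~ early x ->
  exists y, [/\ adj x y, chosen y & first_pos y < first_pos x].
Proof.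
move=> cx; rewrite /early cx /= => /forallPn[y].
rewrite !negb_imply -leqNgt => /and3P[xy cy le_yx].
exists y; split; rewrite // ltn_neqAle le_yx andbT.
by apply: contraTneq xy => /(first_pos_inj cy cx) ->; rewrite cycle_pow_irr.
Qed.

Lemma early_nonadj x y : early x -> early y -> adj x y = false.
Proof.
move=> ex ey; apply/negP => xy.
have := early_before ex xy (early_chosen ey).
by have := early_before ey (_ : adj y x) (early_chosen ex); rewrite cycle_pow_sym xy; lia.
Qed.

Lemma first_nbr_le g y z : first_nbr g y -> chosen z -> adj z y -> first_pos g <= first_pos z.
Proof. by case/and3P=> _ _ /forallP/(_ z)/implyP/[apply]/implyP. Qed.

Lemma first_nbr_uniq g g' y : first_nbr g y -> first_nbr g' y -> g = g'.
Proof.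
move=> dg dg'; have /and3P[cg gy _] := dg; have /and3P[cg' g'y _] := dg'.
apply: first_pos_inj => //; apply/eqP.
by rewrite eqn_leq !(first_nbr_le dg, first_nbr_le dg').
Qed.

(* A vertex played in an already visited layer can only footprint inside that layer. *)
Lemma repeat_nonadj i j : i < size S -> first_pos (s i).1 < i -> j < i ->
  ~~ adj (s j).1 (s i).1.
Proof.
move=> lt_i first_lt lt_ji; have [w w_i w_new] := footprint_nth lt_i.
have [_ s_first] := first_posP (proj1 (chosen_nth lt_i)).
have w_layer : w.1 = (s i).1.
  case: (cnbh_lexprodP w_i) => // adj_w; have := w_new _ first_lt.
  by rewrite cnbh_lexprod_adj // s_first.
by apply: contraNN (w_new _ lt_ji) => adj_ji; rewrite cnbh_lexprod_adj // w_layer.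
Qed.

Lemma late_nth_first c i : chosen c -> ~~ early c -> i < size S -> (s i).1 = c ->
  i = first_pos c.
Proof.
move=> cc late_c lt_i s_i; have [_] := chosen_nth lt_i.
rewrite leq_eqVlt s_i => /orP[/eqP -> // | first_lt].
have [z [c_z cz z_before]] := not_early_nbr cc late_c.
have [_ s_z] := first_posP cz.
have := repeat_nonadj lt_i; rewrite s_i => /(_ _ first_lt (ltn_trans z_before first_lt)).
by rewrite s_z cycle_pow_sym c_z.
Qed.

Lemma mult_late c : chosen c -> ~~ early c -> mult c <= 1.
Proof.
move=> cc late_c; apply: (count_le1 (x0 := d) (k := first_pos c)) => i lt_i /eqP.
exact: late_nth_first.
Qed.

Lemma mult_unchosen x : ~~ chosen x -> mult x = 0.
Proof. by rewrite /chosen has_count -leqNgt leqn0 => /eqP. Qed.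

Lemma mult_layer_proj x : mult x = size (layer_proj x S).
Proof. by rewrite size_map size_filter. Qed.

Lemma mult_le_gamma_gr x : mult x <= gamma_gr eH.
Proof.
rewrite mult_layer_proj; apply: footprint_size_le_gamma_gr.
exact: (footprint_ok_layer_proj (@cycle_pow_irr n m) _ S_ok).
Qed.

Definition late_footprint c y := [&& chosen c, ~~ early c, first_nbr c y &
  [exists h, ~~ has (fun u => (y, h) \in cnbh P u) (take (first_pos c) S)]].

Lemma late_footprint_exists c : chosen c -> ~~ early c -> exists y, late_footprint c y.
Proof.
move=> cc late_c; have [lt_c s_c] := first_posP cc.
have [w w_c w_new] := footprint_nth lt_c.
have [z [c_z cz z_before]] := not_early_nbr cc late_c.
have [_ s_z] := first_posP cz.
have c_w : adj c w.1.
  case: (cnbh_lexprodP w_c) => [w_layer | ]; last by rewrite s_c.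
  by have := w_new _ z_before; rewrite cnbh_lexprod_adj // s_z w_layer s_c cycle_pow_sym.
exists w.1; apply/and4P; split=> //.
  apply/and3P; split=> //; apply/forallP => z'; apply/implyP => cz'; apply/implyP => z'_w.
  rewrite leqNgt; apply/negP => /w_new.
  by rewrite cnbh_lexprod_adj // (proj2 (first_posP cz')).
apply/existsP; exists w.2; rewrite -surjective_pairing.
by apply/negP => /(has_take_nth d) [j [lt_j _ w_j]]; have := w_new _ lt_j; rewrite w_j.
Qed.

Lemma late_footprint_inj c c' y : late_footprint c y -> late_footprint c' y -> c = c'.
Proof. by case/and4P=> _ _ dc _ /and4P[_ _ dc' _]; apply: first_nbr_uniq dc dc'. Qed.

Lemma early_layer_before_nbr y c i : early y -> chosen c -> adj c y ->
  i < size S -> (s i).1 = y -> i < first_pos c.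
Proof.
move=> ey cc cy lt_i s_i; rewrite ltnNge; apply/negP => le_ci.
have y_c : first_pos y < first_pos c by rewrite early_before // cycle_pow_sym.
have [_] := chosen_nth lt_i; rewrite s_i => le_yi.
have first_lt : first_pos (s i).1 < i by rewrite s_i; apply: leq_trans le_ci.
case: (ltngtP (first_pos c) i) le_ci => // [c_i _ | c_i _].
  have := repeat_nonadj lt_i first_lt c_i.
  by rewrite (proj2 (first_posP cc)) s_i cy.
by move: s_i; rewrite -c_i (proj2 (first_posP cc)) => c_y; rewrite c_y cycle_pow_irr in cy.
Qed.

Lemma early_late_footprint_mult y c : early y -> late_footprint c y -> mult y < gamma_gr eH.
Proof.
move=> ey /and4P[cc _ /and3P[_ cy _] /existsP[h h_new]].
rewrite mult_layer_proj; apply: footprint_size_lt_gamma_gr.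
  exact: (footprint_ok_layer_proj (@cycle_pow_irr n m) _ S_ok).
apply/forallPn; exists h; apply: contra h_new => /hasP[h' /mapP[v]].
rewrite mem_filter => /andP[/eqP v_y v_S] -> h_v.
have [i lt_i s_i] : exists2 i, i < size S & s i = v.
  by exists (index v S); rewrite ?index_mem ?nth_index.
have i_c : i < first_pos c by apply: early_layer_before_nbr ey cc cy lt_i _; rewrite s_i.
apply/hasP; exists v.
  by rewrite -s_i -(nth_take d i_c) mem_nth // size_take_min leq_min i_c.
move: h_v; rewrite -(cnbh_lexprod_layer eH (@cycle_pow_irr n m) y) -v_y.
by rewrite -surjective_pairing.
Qed.

Hypotheses (n_gt0 : 0 < n) (n_large : 2 * (m + 1) <= n).

Section ConsecutiveEarly.
Variables g g' : 'I_n.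
Hypotheses (eg : early g) (eg' : early g') (g_ne : g != g').
Hypothesis g'_next : forall g'', early g'' -> g'' != g -> off g g' <= off g g''.

Lemma chosen_nbr_between y z : 0 < off g y < off g g' -> chosen z -> adj z y ->
  first_pos z < first_pos g -> first_pos z < first_pos g' -> 0 < off g z < off g g'.
Proof.
move=> y_between cz zy z_g z_g'.
case: (ltngtP (off g z) (off g g')) => [z_lt | g'_lt | /off_inj z_g'E].
- by rewrite andbT lt0n off_eq0; apply: contraTneq z_g => ->; rewrite ltnn.
- have yz : adj y z by rewrite cycle_pow_sym.
  case/orP: (cycle_pow_across y_between g'_lt yz) => [gz | g'z].
  + by have := early_before eg gz cz; lia.
  + by have := early_before eg' g'z cz; lia.
- by rewrite z_g'E ltnn in z_g'.
Qed.

(* Such a layer cannot be early, [g'] being the next early layer after [g]; so it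
   has a played neighbour played even earlier, which again lies between them. *)
Lemma no_chosen_between z : chosen z -> 0 < off g z < off g g' ->
  first_pos z < first_pos g -> first_pos z < first_pos g' -> False.
Proof.
have [k] := ubnP (first_pos z); elim: k z => // k IH z lt_zk cz z_between z_g z_g'.
have [ez | late_z] := boolP (early z).
  have z_ne : z != g by apply: contraTneq (andP z_between).1 => ->; rewrite off_id.
  by have := g'_next ez z_ne; case/andP: z_between; lia.
have [w [zw cw w_z]] := not_early_nbr cz late_z.
have w_g := ltn_trans w_z z_g; have w_g' := ltn_trans w_z z_g'.
apply: (IH w) => //; first lia.
have wz : adj w z by rewrite cycle_pow_sym.
exact: chosen_nbr_between z_between cw wz w_g w_g'.
Qed.

Lemma first_nbr_between x y : (x == g) || (x == g') ->
  first_pos x <= first_pos g -> first_pos x <= first_pos g' ->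
  0 < off g y < off g g' -> adj x y -> first_nbr x y.
Proof.
move=> x_end x_g x_g' y_between xy.
have cx : chosen x by case/orP: x_end => /eqP ->; apply: early_chosen.
apply/and3P; split=> //; apply/forallP => z; apply/implyP => cz; apply/implyP => zy.
rewrite leqNgt; apply/negP => z_x.
have z_g := leq_trans z_x x_g; have z_g' := leq_trans z_x x_g'.
exact: no_chosen_between cz (chosen_nbr_between y_between cz zy z_g z_g') z_g z_g'.
Qed.

Definition covers_right x := [forall y, (0 < off x y <= m) ==> first_nbr x y].
Definition covers_left x := [forall y, (n - m <= off x y) ==> first_nbr x y].

Lemma consecutive_early_covers : covers_right g || covers_left g'.
Proof.
have gg'_far : m < off g g' < n - m.
  have := early_nonadj eg eg'; rewrite cycle_pow_off lt0n off_eq0 g_ne /=.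
  by have := off_lt g g'; lia.
have cg := early_chosen eg; have cg' := early_chosen eg'.
case: (ltngtP (first_pos g) (first_pos g')) => [g_first | g'_first | /first_pos_inj eq_g].
- apply/orP; left; apply/forallP => y; apply/implyP => /andP[y_gt0 y_le].
  apply: first_nbr_between; rewrite ?eqxx ?leqnn ?(ltnW g_first) //.
    by rewrite y_gt0; lia.
  by rewrite cycle_pow_off y_gt0 y_le.
- apply/orP; right; apply/forallP => y; apply/implyP => y_far.
  have y_between : 0 < off g y < off g g'.
    by have := off_trans g g' y; have := off_lt g' y; case: ifP; lia.
  apply: first_nbr_between; rewrite ?eqxx ?orbT ?leqnn ?(ltnW g'_first) //.
  by rewrite cycle_pow_off y_far orbT andbT; lia.
- by move: g_ne; rewrite eq_g ?eqxx.
Qed.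

End ConsecutiveEarly.

Definition side_layer g (right : bool) (j : 'I_m) : 'I_n :=
  ord_mod n_gt0 (g + if right then j.+1 else n - j.+1).

Lemma off_side_layer g right j :
  off g (side_layer g right j) = if right then j.+1 else n - j.+1.
Proof. by rewrite off_ord_mod modn_small //; have := ltn_ord j; case: right; lia. Qed.

Lemma side_layer_inj g : injective (fun p : bool * 'I_m => side_layer g p.1 p.2).
Proof.
move=> [b1 j1] [b2 j2] /(congr1 (off g)); rewrite !off_side_layer /=.
have := ltn_ord j1; have := ltn_ord j2.
by case: b1; case: b2 => // lt_j2 lt_j1 eq_j; try lia; congr (_, _); apply: val_inj => /=; lia.
Qed.

Lemma adj_side_layer g right j : adj g (side_layer g right j).
Proof.
by rewrite cycle_pow_off off_side_layer; have := ltn_ord j; case: right; lia.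
Qed.

Definition early_set := [set x | early x].
Definition early_nbr_set := [set y | [exists g, early g && first_nbr g y]].

Lemma mem_early_nbr_set g y : early g -> first_nbr g y -> y \in early_nbr_set.
Proof. by move=> eg dg; rewrite inE; apply/existsP; exists g; rewrite eg. Qed.

Lemma early_first : 0 < size S -> early (s 0).1 /\ first_pos (s 0).1 = 0.
Proof.
move=> S_gt0; have [c0 /[!leqn0] /eqP first0] := chosen_nth S_gt0.
split=> //; apply/andP; split=> //; apply/forallP => y; apply/implyP => g0y.
apply/implyP => cy; rewrite first0 lt0n; apply: contraTneq g0y => first_y.
by rewrite (first_pos_inj c0 cy) ?first0 ?cycle_pow_irr.
Qed.

Lemma early_nbr_set_ge_2m : 0 < size S -> 2 * m <= #|early_nbr_set|.
Proof.
move=> /early_first[e0 first0]; set g0 := (s 0).1 in e0 first0.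
pose f p := side_layer g0 p.1 p.2.
have f_dom : f @: [set: bool * 'I_m] \subset early_nbr_set.
  apply/subsetP => _ /imsetP[p _ ->]; apply: (mem_early_nbr_set e0).
  apply/and3P; split; rewrite ?adj_side_layer ?early_chosen //.
  by apply/forallP => z; rewrite first0 leq0n !implybT.
have := subset_leq_card f_dom.
by rewrite (card_imset _ (@side_layer_inj g0)) cardsT card_prod card_bool card_ord.
Qed.

Section TwoEarly.
Hypothesis two_early : 1 < #|early_set|.

Definition next_early g := odflt g [pick g' | [&& early g', g' != g &
  [forall g'', (early g'' && (g'' != g)) ==> (off g g' <= off g g'')]]].

Lemma next_earlyP g : early g -> [/\ early (next_early g), next_early g != g &
  forall g'', early g'' -> g'' != g -> off g (next_early g) <= off g g''].
Proof.
move=> eg; have [g1] : exists g1, g1 \in early_set :\ g.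
  by apply/card_gt0P; move: two_early; rewrite (cardsD1 g) inE eg; lia.
rewrite !inE => /andP[g1_ne eg1].
have P_g1 : early g1 && (g1 != g) by rewrite eg1.
case: (@arg_minnP _ g1 (fun x => early x && (x != g)) (off g) P_g1).
move=> g2 /andP[eg2 g2_ne] g2_min.
rewrite /next_early; case: pickP => [g' /and3P[eg' g'_ne /forallP g'_min] | /(_ g2)] /=.
  by split=> // g'' eg'' g''_ne; have := g'_min g''; rewrite eg'' g''_ne.
rewrite eg2 g2_ne => /negbT/negP[]; apply/forallP => g''.
by apply/implyP => /andP[eg'' g''_ne]; apply: g2_min; rewrite eg''.
Qed.

Lemma next_early_inj g1 g2 : early g1 -> early g2 -> next_early g1 = next_early g2 -> g1 = g2.
Proof.
move=> e1 e2 eq_next; have [-> // | ne] := eqVneq g1 g2.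
have [_ n1 min1] := next_earlyP e1; have [_ n2 min2] := next_earlyP e2.
rewrite eq_next in n1 min1; set g' := next_early g2 in n1 min1 n2 min2.
have := min1 g2 e2 (_ : g2 != g1); rewrite eq_sym ne => /(_ isT) le1.
have le2 := min2 g1 e1 ne.
have := off_trans g2 g1 g'; have := off_sym ne.
have := off_lt g1 g2; have := off_lt g2 g1; have := off_lt g1 g'; have := off_lt g2 g'.
have : 0 < off g1 g' by rewrite lt0n off_eq0 eq_sym.
have : 0 < off g2 g' by rewrite lt0n off_eq0 eq_sym.
have : 0 < off g1 g2 by rewrite lt0n off_eq0.
by case: ifP; lia.
Qed.

Definition covering_early g := if covers_right g then g else next_early g.

Definition covered_layer (p : 'I_n * 'I_m) : 'I_n :=
  side_layer (covering_early p.1) (covers_right p.1) p.2.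

Lemma covered_layer_dom g j : early g ->
  early (covering_early g) /\ first_nbr (covering_early g) (covered_layer (g, j)).
Proof.
move=> eg; rewrite /covered_layer /covering_early /=.
have [en ne next_min] := next_earlyP eg.
case: ifP => [/forallP right_g | left_g]; split=> //.
  apply/implyP: (right_g (side_layer g true j)).
  by rewrite off_side_layer /=; have := ltn_ord j; lia.
have := consecutive_early_covers eg en (_ : g != next_early g) next_min.
rewrite eq_sym ne left_g => /(_ isT) /forallP left_next.
apply/implyP: (left_next (side_layer (next_early g) false j)).
by rewrite off_side_layer /=; have := ltn_ord j; lia.
Qed.

Lemma covered_layer_inj : {in setX early_set setT &, injective covered_layer}.
Proof.
move=> [g1 j1] [g2 j2]; rewrite !inE !andbT => e1 e2 eq_y.
have [_ d1] := covered_layer_dom j1 e1; have [_ d2] := covered_layer_dom j2 e2.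
rewrite eq_y in d1; have eq_cov := first_nbr_uniq d1 d2.
move: eq_y; rewrite /covered_layer /= eq_cov => eq_y.
have [eq_side ->] := side_layer_inj (x1 := (covers_right g1, j1)) (x2 := (_, j2)) eq_y.
congr (_, _); move: eq_cov; rewrite /covering_early eq_side.
by case: ifP => // _; apply: next_early_inj.
Qed.

Lemma early_nbr_set_ge_mul : #|early_set| * m <= #|early_nbr_set|.
Proof.
have cov_dom : covered_layer @: setX early_set setT \subset early_nbr_set.
  apply/subsetP => y /imsetP[[g j] /setXP[eg _] ->]; rewrite inE in eg.
  by have [ec dc] := covered_layer_dom j eg; apply: mem_early_nbr_set ec dc.
have := subset_leq_card cov_dom.
by rewrite (card_in_imset covered_layer_inj) cardsX cardsT card_ord.
Qed.

End TwoEarly.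

Definition late_set := [set x | chosen x && ~~ early x].
Definition late_footprint_set := [set y | [exists c, late_footprint c y]].

Lemma late_set_le : #|late_set| <= #|late_footprint_set|.
Proof.
pose f x := odflt x [pick y | late_footprint x y].
have f_fp x : x \in late_set -> late_footprint x (f x).
  rewrite inE => /andP[cx late_x]; rewrite /f; case: pickP => [y // | /= none].
  by have [y] := late_footprint_exists cx late_x; rewrite none.
have f_inj : {in late_set &, injective f}.
  move=> x1 x2 /f_fp fp1 /f_fp fp2 eq_f; rewrite eq_f in fp1.
  exact: late_footprint_inj fp1 fp2.
rewrite -(card_in_imset f_inj); apply: subset_leq_card; apply/subsetP => _ /imsetP[x lx ->].
by rewrite inE; apply/existsP; exists x; apply: f_fp.
Qed.

Lemma sum_early_mult_le :
  \sum_(x in early_set) mult x + #|late_footprint_set :&: early_set|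
    <= #|early_set| * gamma_gr eH.
Proof.
have -> : #|late_footprint_set :&: early_set| =
    \sum_(x in early_set) (x \in late_footprint_set).
  rewrite -sum1_card (eq_bigl (fun x => (x \in early_set) && (x \in late_footprint_set))).
    by rewrite big_mkcondr; apply: eq_bigr => x _; case: (x \in late_footprint_set).
  by move=> x; rewrite !inE andbC.
rewrite -big_split -sum_nat_const; apply: leq_sum => x; rewrite inE => ex /=.
have [fp_x | _] := boolP (x \in late_footprint_set).
  by move: fp_x; rewrite inE addn1 => /existsP[c /(early_late_footprint_mult ex)].
by rewrite addn0 mult_le_gamma_gr.
Qed.

Lemma card_disjoint_parts :
  #|late_footprint_set :\: early_set| + #|early_nbr_set| + #|early_set| <= n.
Proof.
have disj1 : [disjoint late_footprint_set :\: early_set & early_nbr_set].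
  rewrite disjoints_subset; apply/subsetP => y; rewrite !inE.
  move=> /andP[_ /existsP[c /and4P[_ late_c dc _]]]; apply/existsP => -[g /andP[eg dg]].
  by rewrite (first_nbr_uniq dc dg) eg in late_c.
have disj2 : [disjoint (late_footprint_set :\: early_set) :|: early_nbr_set & early_set].
  rewrite disjoints_subset; apply/subsetP => y; rewrite !inE => /orP[/andP[] // |].
  move=> /existsP[g /andP[eg /and3P[_ gy _]]]; apply/negP => ey.
  by rewrite early_nonadj in gy.
move: disj1 disj2; rewrite -!(leq_card_setU _ _).2 => /eqP <- /eqP <-.
by apply: leq_trans (max_card _) _; rewrite card_ord.
Qed.

Lemma size_le_sum_early_mult : size S <= \sum_(x in early_set) mult x + #|late_set|.
Proof.
rewrite (size_sum_count fst) (bigID (mem early_set)) /= leq_add2l.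
have -> : #|late_set| = \sum_x (x \in late_set).
  by rewrite -sum1_card big_mkcond; apply: eq_bigr => x _; case: (x \in late_set).
rewrite [X in _ <= X](bigID (mem early_set)) /=; apply: leq_trans (leq_addl _ _).
apply: leq_sum => x; rewrite inE => late_x.
have [cx | /mult_unchosen] := boolP (chosen x); last by rewrite /mult => ->.
by rewrite inE cx late_x mult_late.
Qed.

Lemma size_count_bound :
  size S + #|early_nbr_set| + #|early_set| <= #|early_set| * gamma_gr eH + n.
Proof.
have := size_le_sum_early_mult; have := late_set_le; have := sum_early_mult_le.
by have := card_disjoint_parts; have := cardsID early_set late_footprint_set; lia.
Qed.

Lemma size_le_gamma_gr_formula : size S <= gamma_gr_formula n m (gamma_gr eH).
Proof.
have [-> // | S_gt0] := posnP (size S).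
have E_gt0 : 0 < #|early_set|.
  by apply/card_gt0P; exists (s 0).1; rewrite inE (early_first S_gt0).1.
have G_gt0 : 0 < gamma_gr eH by apply/gamma_gr_gt0/card_gt0P; exists d.2.
apply: (le_gamma_gr_formula (R := #|early_nbr_set|) (e := #|early_set|)) => //.
- exact: size_count_bound.
- by have := card_disjoint_parts; lia.
- exact: early_nbr_set_ge_2m.
- exact: early_nbr_set_ge_mul.
Qed.

End LegalSequence.

(** * Lower bound: a long legal sequence *)

Section Construction.
Variables (n m : nat) (V : finType) (eH : rel V).
Hypotheses (n_gt0 : 0 < n) (m_gt0 : 0 < m).
Local Notation adj := (cycle_pow n m).
Local Notation P := (lexprod adj eH).
Local Notation ord k := (ord_mod n_gt0 k).

Lemma far_from_ord (u : 'I_n) b : u + (m + 1) <= b -> b + (m + 1) <= n ->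
  (u != ord b) && ~~ adj u (ord b).
Proof.
move=> u_far b_far; have u_ord : u = ord u by apply: val_inj; rewrite /= modn_small.
rewrite [in adj u _]u_ord cycle_pow_ord_mod; last by lia.
by rewrite -val_eqE /= modn_small; lia.
Qed.

Definition layer_seq (x : 'I_n) (l : seq V) := [seq (x, h) | h <- l].

Lemma footprint_ok_layer_seq x hprev l prev : footprint_ok eH hprev l ->
  (forall u, u \in prev -> (u.1 = x /\ u.2 \in hprev) \/ (u.1 != x /\ ~~ adj u.1 x)) ->
  footprint_ok P prev (layer_seq x l).
Proof.
elim: l hprev prev => [|h l IH] hprev prev //= /andP[/existsP[w /andP[wh w_new]] fl] prev_ok.
apply/andP; split.
  apply/existsP; exists (x, w); rewrite (cnbh_lexprod_layer eH (@cycle_pow_irr n m)) wh /=.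
  apply/hasP => -[u /prev_ok[[u_x u_h] | [u_x u_far]]].
    rewrite [u]surjective_pairing u_x (cnbh_lexprod_layer eH (@cycle_pow_irr n m)) => w_u.
    by case/hasP: w_new; exists u.2.
  by apply/negP; apply: notin_cnbh_lexprod.
apply: (IH (h :: hprev)) => // u; rewrite inE => /predU1P[-> | /prev_ok[[u_x u_h] | ]].
- by left; rewrite inE eqxx.
- by left; rewrite inE u_h orbT.
- by right.
Qed.

Variables (e : nat) (h0 : V).
Hypotheses (e_gt1 : 1 < e) (e_le : e * (m + 1) <= n).
Local Notation r := (n - e * (m + 1)).

(* The single vertex played in layer [j] footprints layer [j + m], which the
   vertices played so far (all in layers below [j]) do not dominate. *)
Lemma footprint_ok_singles j0 c (prev : seq ('I_n * V)) : 0 < j0 -> j0 + c <= r + 1 ->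
  (forall u, u \in prev -> u.1 < j0) ->
  footprint_ok P prev [seq (ord j, h0) | j <- iota j0 c].
Proof.
elim: c j0 prev => [|c IH] j0 prev // j0_gt0 j0_le prev_lt /=.
have r_small : r + 2 * m < n by nia.
apply/andP; split.
  apply/existsP; exists (ord (j0 + m), h0); apply/andP; split.
    rewrite inE /lexprod /= cycle_pow_ord_mod; last by lia.
    by rewrite addKn leqnn orbT.
  apply/hasP => -[u /prev_lt u_lt].
  have /andP[u_ne u_far] : (u.1 != ord (j0 + m)) && ~~ adj u.1 (ord (j0 + m)).
    by apply: far_from_ord; lia.
  by apply/negP; apply: notin_cnbh_lexprod.
apply: IH; [lia | lia |] => u; rewrite inE => /predU1P[-> | /prev_lt]; last lia.
by rewrite /= modn_small; lia.
Qed.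

Lemma footprint_ok_blocks l i0 c (prev : seq ('I_n * V)) :
  footprint_ok eH [::] l -> 0 < i0 -> i0 + c <= e ->
  (forall u, u \in prev -> u.1 + (m + 1) <= r + i0 * (m + 1)) ->
  footprint_ok P prev [seq (ord (r + i * (m + 1)), h) | i <- iota i0 c, h <- l].
Proof.
move=> fl; elim: c i0 prev => [|c IH] i0 prev // i0_gt0 i0_le prev_far /=.
have block_lt : r + i0 * (m + 1) + (m + 1) <= n.
  by have := leq_mul (_ : i0.+1 <= e) (leqnn (m + 1)); rewrite ?mulSn; lia.
rewrite footprint_ok_cat; apply/andP; split.
  apply: (footprint_ok_layer_seq fl) => u /prev_far u_far; right.
  by apply/andP; apply: far_from_ord.
apply: IH; [lia | lia |] => u; rewrite catrevE mem_cat mem_rev.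
case/orP => [/mapP[h _ ->] | /prev_far]; last lia.
by rewrite /= modn_small; lia.
Qed.

Definition lexprod_witness (l : seq V) : seq ('I_n * V) :=
  layer_seq (ord 0) l ++ [seq (ord j, h0) | j <- iota 1 r] ++
  [seq (ord (r + i * (m + 1)), h) | i <- iota 1 e.-1, h <- l].

Lemma footprint_ok_lexprod_witness l :
  footprint_ok eH [::] l -> footprint_ok P [::] (lexprod_witness l).
Proof.
move=> fl; rewrite !footprint_ok_cat (footprint_ok_layer_seq fl) //.
rewrite footprint_ok_singles //=; last first.
- by move=> u; rewrite catrevE cats0 mem_rev => /mapP[h _ ->]; rewrite /= mod0n.
- lia.
apply: footprint_ok_blocks => //; first lia.
move=> u; rewrite !catrevE cats0 mem_cat !mem_rev => /orP[/mapP[j] | /mapP[h _ ->]].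
  by rewrite mem_iota => /andP[j_ge1 j_lt] ->; rewrite /= modn_small; lia.
by rewrite /= mod0n; lia.
Qed.

Lemma size_lexprod_witness l : size (lexprod_witness l) = e * size l + r.
Proof.
rewrite !size_cat !size_map size_allpairs !size_iota.
by rewrite addnCA -mulSn prednK ?(ltnW e_gt1) // addnC.
Qed.

Lemma gamma_gr_lexprod_ge : e * gamma_gr eH + r <= gamma_gr P.
Proof.
have [l fl <-] := gamma_gr_attained eH; rewrite -size_lexprod_witness.
exact/footprint_size_le_gamma_gr/footprint_ok_lexprod_witness.
Qed.

End Construction.

Unset Implicit Arguments.

Theorem theorem3 (n m : nat) (V : finType) (eH : rel V) :
  0 < n -> 0 < m -> 2 * (m + 1) <= n ->
  0 < #|V| -> symmetric eH -> irreflexive eH ->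
  gamma_gr (lexprod (cycle_pow n m) eH) =
  (if m + 1 <= gamma_gr eH
   then n %/ (m + 1) * (gamma_gr eH - (m + 1)) + n
   else 2 * gamma_gr eH + n - (2 * m + 2)).
Proof.
move=> n_gt0 m_gt0 n_large /card_gt0P[h0 _] _ _.
apply/eqP; rewrite eqn_leq; apply/andP; split.
  apply: gamma_gr_le_bound => S /and3P[_ _ S_ok].
  exact: (size_le_gamma_gr_formula (ord_mod n_gt0 0, h0) S_ok n_gt0 n_large).
case: ifP => G_large; last first.
  by have := gamma_gr_lexprod_ge eH n_gt0 m_gt0 h0 (leqnn 2) n_large; lia.
set q := n %/ (m + 1).
have q_ge2 : 1 < q by rewrite leq_divRL // addn1.
have := gamma_gr_lexprod_ge eH n_gt0 m_gt0 h0 q_ge2 (leq_divM n (m + 1)).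
have : q * gamma_gr eH = q * (gamma_gr eH - (m + 1)) + q * (m + 1) by rewrite -mulnDr subnK.
lia.
Qed.
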